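(* Let $1\le k\le n-1$, let $I,J\in V_{k,n}$, and let $P_1,\dots,P_d$ be the connected components of $F_I\triangle F_J$, ordered by increasing column index. Let $\alpha_I,\alpha_J\in\{0,1\}^d$ be defined by $(\alpha_I)_m=1$ iff $P_m\subseteq F_I$ (and similarly for $J$), so that $\chi_I=\chi_{F_I\cap F_J}+\sum_m(\alpha_I)_m\chi_{P_m}$ and likewise for $J$. Then: (1) $I$ and $J$ are nonnesting if and only if $\{\alpha_I,\alpha_J\}=\{(0,\dots,0),(1,\dots,1)\}$; (2) $I$ and $J$ are noncrossing if and only if $\{\alpha_I,\alpha_J\}=\{(0,1,0,1,\dots),(1,0,1,0,\dots)\}$ (the two alternating vectors of length $d$).
   Context: $V_{k,n}$ denotes the set of integer vectors $I=(i_1,\dots,i_k)$ with $1\le i_1<\dots<i_k\le n$. Two arcs $(p<p')$, $(q<q')$ cross if $p<q<p'<q'$ or $q<p<q'<p'$; they nest if $p<q<q'<p'$ or $q<p<p'<q'$. $I,J$ are noncrossing if for all $1\le a<b\le k$ with $i_\ell=j_\ell$ for all $a<\ell<b$, the arcs $(i_a<i_b)$ and $(j_a<j_b)$ do not cross; they are nonnesting if for all $1\le a<b\le k$ these arcs do not nest. Let $P_{k,n}=\{(a,b):a\in[k],b\in[n-k]\}$ ($a$ = row, $b$ = column index), and for $I\in V_{k,n}$ let $F_I=\{(a,b)\in P_{k,n}: i_a\le a+b-1\}$ with characteristic vector $\chi_I$. The connected components of $S=F_I\triangle F_J$ are taken with respect to adjacency of positions differing by $1$ in exactly one coordinate; they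 occupy pairwise disjoint intervals of column indices, and are labeled $P_1,\dots,P_d$ from left (smallest column indices) to right. *)

From mathcomp Require Import all_boot.
Set Implicit Arguments. Unset Strict Implicit. Unset Printing Implicit Defensive.

(* A vector I = (i_1,...,i_k) is a seq nat; i_a (1-based) is nth 0 I (a-1). *)
Definition inV (k n : nat) (I : seq nat) : bool :=
  [&& size I == k, sorted ltn I & all (fun x => 0 < x <= n) I].

(* arcs (p < p') and (q < q') *)
Definition cross (p p' q q' : nat) : bool :=
  ((p < q) && (q < p') && (p' < q')) || ((q < p) && (p < q') && (q' < p')).
Definition nest (p p' q q' : nat) : bool :=
  ((p < q) && (q < q') && (q' < p')) || ((q < p) && (p < p') && (p' < q')).

(* 0-based indices a < b < k correspond to 1-based a+1 < b+1 <= k *)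
Definition noncrossing (k : nat) (I J : seq nat) : Prop :=
  forall a b, a < b < k ->
    (forall l, a < l < b -> nth 0 I l = nth 0 J l) ->
    ~~ cross (nth 0 I a) (nth 0 I b) (nth 0 J a) (nth 0 J b).

Definition nonnesting (k : nat) (I J : seq nat) : Prop :=
  forall a b, a < b < k ->
    ~~ nest (nth 0 I a) (nth 0 I b) (nth 0 J a) (nth 0 J b).

(* P_{k,n}: position (a,b) 0-based stands for (a+1,b+1) (row, column). *)
Definition pos (k n : nat) := ('I_k * 'I_(n - k))%type.

(* F_I = {(a,b) : i_a <= a + b - 1} in 1-based indices *)
Definition F (k n : nat) (I : seq nat) : {set pos k n} :=
  [set p : pos k n | nth 0 I p.1 <= p.1 + p.2 + 1].

Definition symd (k n : nat) (I J : seq nat) : {set pos k n} :=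
  (F k n I :\: F k n J) :|: (F k n J :\: F k n I).

Definition adj (k n : nat) (p q : pos k n) : bool :=
  ((p.1 == q.1) && ((p.2.+1 == q.2 :> nat) || (q.2.+1 == p.2 :> nat))) ||
  ((p.2 == q.2) && ((p.1.+1 == q.1 :> nat) || (q.1.+1 == p.1 :> nat))).

Definition adjS (k n : nat) (S : {set pos k n}) : rel (pos k n) :=
  fun p q => [&& p \in S, q \in S & adj p q].

Definition components (k n : nat) (S : {set pos k n}) : {set {set pos k n}} :=
  [set [set q | connect (adjS S) p q] | p in S].

Definition mincol (k n : nat) (C : {set pos k n}) : nat :=
  \big[minn/n]_(p in C) (p.2 : nat).

Definition comps (k n : nat) (I J : seq nat) : seq {set pos k n} :=
  sort (fun C D => mincol C <= mincol D) (enum (components (symd k n I J))).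

Definition alpha (k n : nat) (X I J : seq nat) : seq bool :=
  [seq (C \subset F k n X) | C : {set pos k n} <- comps k n I J].

Definition alt01 (d : nat) : seq bool := mkseq (fun m => odd m) d.
Definition alt10 (d : nat) : seq bool := mkseq (fun m => ~~ odd m) d.

From mathcomp Require Import all_boot zify.
Set Implicit Arguments. Unset Strict Implicit. Unset Printing Implicit Defensive.

(* In row a the cells of F_I (symdiff) F_J form one horizontal run, lying between the columns
   determined by i_a and j_a, and on it F_I is the side of the smaller of the two.  Since both
   vectors increase by at least one per row, any two cells of the symmetric difference with one
   weakly south-west of the other are joined by a path inside it.  Hence cells of distinct
   components are strictly north-west/south-east of each other, the components are linearly
   ordered, each lies in F_I or in F_J according to the constant sign of i_a - j_a on its rows,
   and alpha_J is the complement of alpha_I.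
   (1) A nest between rows a < b is exactly a sign change between two nonzero rows.
   (2) Two consecutive components of equal sign are separated either by a row with i = j or by
   adjacent rows whose runs do not touch, and in both cases the boundary arcs cross; conversely,
   crossing arcs at rows a < b (equal in between) separate the components through rows a and b
   with no component in between, and these have the same sign. *)

Lemma compl_pair_eqi (s a : seq bool) :
  [:: s; map negb s] =i [:: a; map negb a] <-> s = a \/ s = map negb a.
Proof.
split=> [/(_ s)|[]-> //]; first by rewrite !inE eqxx => /esym/orP[]/eqP; auto.
by move=> x; rewrite (mapK negbK) !inE orbC.
Qed.

Lemma compl_pair_nseqP (s : seq bool) :
  [:: s; map negb s] =i [:: nseq (size s) false; nseq (size s) true] <-> constant s.
Proof.
rewrite -[nseq _ true]/(nseq _ (~~ false)) -map_nseq compl_pair_eqi map_nseq.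
split=> [[]->|]; try exact: constant_nseq.
by case/(constantP false)=> -[] Es; [right | left].
Qed.

Lemma compl_pair_altP (s : seq bool) :
  [:: s; map negb s] =i [:: alt01 (size s); alt10 (size s)] <->
  sorted (fun x y => x != y) s.
Proof.
have alt10E : map negb (alt01 (size s)) = alt10 (size s) by rewrite -map_comp.
rewrite -alt10E compl_pair_eqi alt10E /alt01 /alt10; split=> [|/(sortedP false) alt_s].
  case=> ->; apply/(sortedP false) => i; rewrite size_mkseq => lt_i1;
  by rewrite !nth_mkseq ?(ltnW lt_i1) //=; case: (odd i).
have nthE i : i < size s -> nth false s i = nth false s 0 (+) odd i.
  elim: i => [|i IHi] lt_i; first by case: (nth false s 0).
  move: (alt_s i lt_i); rewrite IHi ?(ltnW lt_i) //=.
  by case: (nth false s i.+1); case: (nth false s 0); case: (odd i).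
case: (nth false s 0) nthE => nthE; [right | left];
  by apply: (@eq_from_nth _ false); rewrite ?size_mkseq // => i lt_i; rewrite nth_mkseq // nthE.
Qed.

Lemma constant_eq_in (T : eqType) (s : seq T) :
  constant s <-> {in s &, forall x y, x = y}.
Proof.
case: s => [|x s] //=; split=> [/all_pred1P Es | eq_s]; last first.
  by apply/allP => y s_y; rewrite /= (eq_s y x) ?inE ?s_y ?eqxx ?orbT.
have all_x y : y \in x :: s -> y = x.
  by rewrite Es inE mem_nseq => /orP[/eqP | /andP[_ /eqP]].
by move=> y z /all_x -> /all_x ->.
Qed.

Lemma sorted_ltn_nth_add (s : seq nat) a b :
  sorted ltn s -> a <= b < size s -> nth 0 s a + (b - a) <= nth 0 s b.
Proof.
move=> s_sorted; elim: b => [|b IHb] /andP[le_ab lt_bs].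
  by move: le_ab; rewrite leqn0 => /eqP->; rewrite addn0.
case: (ltngtP a b.+1) le_ab => // [lt_ab|<-] _; last by rewrite subnn addn0.
have := IHb ltac:(lia).
have := sorted_ltn_nth ltn_trans 0 s_sorted b b.+1 (ltnW lt_bs) lt_bs (ltnSn b).
lia.
Qed.

Lemma inV_nth_gap k n X a b : inV k n X -> a <= b < k -> nth 0 X a + (b - a) <= nth 0 X b.
Proof.
by case/and3P=> /eqP size_X X_sorted _ le_abk; apply: sorted_ltn_nth_add; rewrite ?size_X.
Qed.

Lemma inV_nth_bound k n X a : inV k n X -> a < k -> a < nth 0 X a /\ nth 0 X a + k <= n + a + 1.
Proof.
move=> VX lt_ak; have /and3P[/eqP size_X _ /(all_nthP 0) X_range] := VX.
have := X_range 0 ltac:(lia); have := X_range k.-1 ltac:(lia).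
have := inV_nth_gap VX (ltac:(lia) : 0 <= a < k).
have := inV_nth_gap VX (ltac:(lia) : a <= k.-1 < k).
lia.
Qed.

Lemma geq_bigmin_cond (T : eqType) (r : seq T) (P : pred T) (F : T -> nat) x0 i0 :
  i0 \in r -> P i0 -> \big[minn/x0]_(i <- r | P i) F i <= F i0.
Proof.
elim: r => // i r IHr; rewrite inE big_cons => /orP[/eqP-> -> | r_i0 P_i0].
  exact: geq_minl.
by case: (P i); rewrite ?(leq_trans (geq_minr _ _)) ?IHr.
Qed.

Section SymmetricDifference.

Variables (k n : nat) (I J : seq nat).
Hypotheses (VI : inV k n I) (VJ : inV k n J).

Local Notation S := (symd k n I J).
Local Notation e := (adjS S).
Local Notation cell := (pos k n).
Local Notation row_sign a := (nth 0 I a < nth 0 J a).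

Lemma mem_symd (p : cell) : p \in S =
  (nth 0 I p.1 <= p.1 + p.2 + 1 < nth 0 J p.1) || (nth 0 J p.1 <= p.1 + p.2 + 1 < nth 0 I p.1).
Proof. by rewrite !inE; apply/idP/idP; lia. Qed.

Lemma row_bounds a : a < k ->
  [/\ a < nth 0 I a, nth 0 I a + k <= n + a + 1, a < nth 0 J a & nth 0 J a + k <= n + a + 1].
Proof.
by move=> lt_ak; have [? ?] := inV_nth_bound VI lt_ak; have [? ?] := inV_nth_bound VJ lt_ak.
Qed.

Lemma row_gaps a b : a <= b < k ->
  nth 0 I a + (b - a) <= nth 0 I b /\ nth 0 J a + (b - a) <= nth 0 J b.
Proof. by move=> le_abk; split; [apply: inV_nth_gap VI le_abk | apply: inV_nth_gap VJ le_abk]. Qed.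

Lemma adjE (p q : cell) : adj p q =
  (((p.1 : nat) == q.1) && ((p.2.+1 == q.2) || (q.2.+1 == p.2))) ||
  (((p.2 : nat) == q.2) && ((p.1.+1 == q.1) || (q.1.+1 == p.1))).
Proof. by []. Qed.

Lemma cell_eq (p q : cell) : p.1 = q.1 :> nat -> p.2 = q.2 :> nat -> p = q.
Proof. by case: p q => [a b] [c d] /= /val_inj-> /val_inj->. Qed.

(* Walk left from x until y's column, then down; the row bounds keep each step in S. *)
Lemma connect_symd_SW (x y : cell) : x \in S -> y \in S ->
  x.1 <= y.1 -> y.2 <= x.2 -> connect e x y.
Proof.
move dist_xy : (y.1 - x.1 + (x.2 - y.2)) => d.
elim: d x dist_xy => [|d IHd] x dist_xy Sx Sy le_xy1 le_yx2.
  by rewrite (@cell_eq x y) ?connect0 //; lia.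
have [? ? ? ?] := row_bounds (ltn_ord x.1); have [? ? ? ?] := row_bounds (ltn_ord y.1).
have lty1 := ltn_ord y.1; have ltx2 := ltn_ord x.2.
have [? ?] := row_gaps (ltac:(lia) : x.1 <= y.1 < k).
move: Sx Sy; rewrite !mem_symd => Sx Sy.
case: (ltnP y.2 x.2) => [lt_yx2 | le_xy2].
  have lt_c : x.2.-1 < n - k by lia.
  pose x' : cell := (x.1, Ordinal lt_c).
  apply: connect_trans (connect1 (_ : e x x')) (IHd x' _ _ _ _ _);
    rewrite ?mem_symd //=; try lia.
  by rewrite /adjS !mem_symd adjE /=; apply/and3P; split; lia.
have lt_r : x.1.+1 < k by lia.
pose x' : cell := (Ordinal lt_r, x.2).
have [? ? ? ?] := row_bounds lt_r.
have [? ?] := row_gaps (ltac:(lia) : x.1 <= x.1.+1 < k).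
have [? ?] := row_gaps (ltac:(lia) : x.1.+1 <= y.1 < k).
apply: connect_trans (connect1 (_ : e x x')) (IHd x' _ _ _ _ _);
  rewrite ?mem_symd //=; try lia.
by rewrite /adjS !mem_symd adjE /=; apply/and3P; split; lia.
Qed.

Lemma adjS_sym : symmetric e.
Proof. by move=> p q; rewrite /adjS !adjE; apply/idP/idP; lia. Qed.

Lemma connect_symd_sym : connect_sym e.
Proof. exact: sym_connect_sym adjS_sym. Qed.

Definition lt_cell (p q : cell) := (p.1 < q.1) && (p.2 < q.2).

Lemma symd_disconnected (x y : cell) : x \in S -> y \in S -> ~~ connect e x y ->
  lt_cell x y || lt_cell y x.
Proof.
move=> Sx Sy /negP xy_disc; rewrite /lt_cell.
have SW_xy : x.1 <= y.1 -> y.2 <= x.2 -> False.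
  by move=> *; apply/xy_disc/connect_symd_SW.
have SW_yx : y.1 <= x.1 -> x.2 <= y.2 -> False.
  by move=> *; apply/xy_disc; rewrite connect_symd_sym; apply: connect_symd_SW.
lia.
Qed.

Lemma lt_cell_adjS (c z z' : cell) : c \in S -> e z z' -> ~~ connect e c z' ->
  (lt_cell c z -> lt_cell c z') /\ (lt_cell z c -> lt_cell z' c).
Proof.
move=> Sc /[dup] /and3P[_ Sz' adj_zz'] ezz' cz'_disc.
move: (symd_disconnected Sc Sz' cz'_disc) adj_zz'; rewrite /lt_cell adjE.
by split=> ?; lia.
Qed.

Lemma connect_preserves (R : pred cell) (c x y : cell) :
  (forall z z', e z z' -> ~~ connect e c z' -> R z -> R z') ->
  ~~ connect e c x -> R x -> connect e x y -> R y.
Proof.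
move=> R_adj cx_disc Rx xy.
pose P := [pred z | R z || connect e c z].
have closedP : closed e P.
  suff P_adj z z' : e z z' -> z \in P -> z' \in P.
    by move=> z z' ezz'; apply/idP/idP; apply: P_adj; rewrite // adjS_sym.
  rewrite !inE => ezz' /orP[Rz | cz]; last by rewrite (connect_trans cz (connect1 ezz')) orbT.
  by case: (boolP (connect e c z')) => [_ | cz'_disc]; rewrite ?orbT // (R_adj z).
have : y \in P by rewrite -(closed_connect closedP xy) inE Rx.
rewrite inE => /orP[// | cy].
by case/negP: cx_disc; rewrite (connect_trans cy) // connect_symd_sym.
Qed.

Definition comp (p : cell) : {set cell} := [set q | connect e p q].

Lemma comp_id p : p \in comp p.
Proof. by rewrite inE connect0. Qed.

Lemma componentsP C : reflect (exists2 p, p \in S & C = comp p) (C \in components S).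
Proof. exact: imsetP. Qed.

Lemma connect_symd p q : connect e p q -> p \in S -> q \in S.
Proof.
by move=> pq Sp; rewrite -(closed_connect (_ : closed e S) pq) // => ? ? /and3P[-> ->].
Qed.

Lemma comp_eq p q : connect e p q -> comp p = comp q.
Proof. by move=> pq; apply/setP => z; rewrite !inE (same_connect connect_symd_sym pq). Qed.

Definition before (C D : {set cell}) := {in C & D, forall p q, lt_cell p q}.

Lemma comp_before c d : c \in S -> d \in S -> ~~ connect e c d -> lt_cell c d ->
  before (comp c) (comp d).
Proof.
move=> Sc Sd cd_disc lt_cd p q; rewrite !inE => cp dq.
have lt_cq : lt_cell c q.
  apply: (@connect_preserves (lt_cell c) c d q _ cd_disc lt_cd dq).
  by move=> z z' ez /(lt_cell_adjS Sc ez)[].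
have qc_disc : ~~ connect e q c.
  by apply: contra cd_disc => qc; rewrite connect_symd_sym (connect_trans dq qc).
apply: (@connect_preserves (lt_cell^~ q) q c p _ qc_disc lt_cq cp).
by move=> z z' ez /(lt_cell_adjS (connect_symd dq Sd) ez)[].
Qed.

Lemma components_before C D : C \in components S -> D \in components S -> C != D ->
  before C D \/ before D C.
Proof.
move=> /componentsP[c Sc ->] /componentsP[d Sd ->] neq_CD.
have cd_disc : ~~ connect e c d by apply: contra neq_CD => /comp_eq ->.
have dc_disc : ~~ connect e d c by rewrite connect_symd_sym.
by case/orP: (symd_disconnected Sc Sd cd_disc) => lt; [left | right]; apply: comp_before.
Qed.

Lemma mincol_before C D : C \in components S -> before C D -> mincol C < mincol D.
Proof.
case/componentsP=> c _ -> C_D; apply: (@leq_ltn_trans c.2).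
  by apply: geq_bigmin_cond; rewrite ?mem_index_enum ?comp_id.
apply: (big_ind (fun v => c.2 < v)) => [|u v lt_u lt_v|q Dq].
- by have := ltn_ord c.2; lia.
- by rewrite leq_min lt_u.
- by case/andP: (C_D c q (comp_id c) Dq).
Qed.

Local Notation L := (comps k n I J).
Local Notation P m := (nth set0 L m).

Lemma mem_comps C : (C \in L) = (C \in components S).
Proof. by rewrite mem_sort mem_enum. Qed.

Lemma nth_comps m : m < size L -> exists2 p, p \in S & P m = comp p.
Proof. by move=> lt_m; apply/componentsP; rewrite -mem_comps mem_nth. Qed.

Lemma comps_index p : p \in S -> exists2 m, m < size L & P m = comp p.
Proof.
move=> Sp; have L_p : comp p \in L by rewrite mem_comps; apply/componentsP; exists p.
by exists (index (comp p) L); rewrite ?index_mem ?nth_index.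
Qed.

Lemma before_nth i j : i < j < size L -> before (P i) (P j).
Proof.
case/andP=> lt_ij lt_j; have lt_i := ltn_trans lt_ij lt_j.
have comps_i : P i \in components S by rewrite -mem_comps mem_nth.
have comps_j : P j \in components S by rewrite -mem_comps mem_nth.
have neq_ij : P i != P j by rewrite nth_uniq ?ltn_eqF ?sort_uniq ?enum_uniq.
case: (components_before comps_i comps_j neq_ij) => // /(mincol_before comps_j).
have sorted_L : sorted (fun C D => mincol C <= mincol D) L.
  by apply: sort_sorted => C D; apply: leq_total.
have mincol_trans : transitive (fun C D : {set cell} => mincol C <= mincol D).
  by move=> ? ? ?; apply: leq_trans.
have le_ij : mincol (P i) <= mincol (P j).
  apply: (sorted_leq_nth mincol_trans (fun C => leqnn _) set0 sorted_L);
  by rewrite ?inE ?lt_i ?lt_j ?(ltnW lt_ij).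
by rewrite ltnNge le_ij.
Qed.

Lemma comps_index_row i j (p q : cell) : i < size L -> j < size L ->
  p \in P i -> q \in P j -> p.1 < q.1 -> i <= j.
Proof.
move=> lt_i lt_j Pi_p Pj_q lt_pq; rewrite leqNgt; apply/negP => lt_ji.
by case/andP: (before_nth (ltac:(lia) : j < i < size L) Pj_q Pi_p); lia.
Qed.

Lemma adjS_row_sign (p q : cell) : e p q ->
  row_sign p.1 = row_sign q.1.
Proof.
case/and3P; rewrite !mem_symd adjE => Sp Sq adj_pq.
have [/val_inj-> // | ne_pq] := eqVneq (p.1 : nat) q.1.
have lt_p := ltn_ord p.1; have lt_q := ltn_ord q.1.
case: (leqP p.1 q.1) => [le_pq | lt_qp].
  by have [? ?] := row_gaps (ltac:(lia) : p.1 <= q.1 < k); apply/idP/idP; lia.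
by have [? ?] := row_gaps (ltac:(lia) : q.1 <= p.1 < k); apply/idP/idP; lia.
Qed.

Lemma closed_row_sign : closed e [pred p : cell | row_sign p.1].
Proof. by move=> p q /adjS_row_sign; rewrite !inE. Qed.

Lemma mem_F X (p : cell) : (p \in F k n X) = (nth 0 X p.1 <= p.1 + p.2 + 1).
Proof. by rewrite inE. Qed.

Lemma symd_FI (p : cell) : p \in S -> (p \in F k n I) = row_sign p.1.
Proof. by rewrite mem_symd mem_F => Sp; apply/idP/idP; lia. Qed.

Lemma symd_FJ (p : cell) : p \in S -> (p \in F k n J) = ~~ row_sign p.1.
Proof. by rewrite mem_symd mem_F => Sp; apply/idP/idP; lia. Qed.

Lemma mem_comp_symd p q : p \in S -> q \in comp p ->
  q \in S /\ row_sign q.1 = row_sign p.1.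
Proof.
move=> Sp; rewrite inE => pq; split; first exact: connect_symd pq Sp.
by have := closed_connect closed_row_sign pq; rewrite !inE => ->.
Qed.

Lemma comp_sub_FI p : p \in S -> (comp p \subset F k n I) = row_sign p.1.
Proof.
move=> Sp; apply/subsetP/idP => [/(_ p (comp_id p)) | sgn q /(mem_comp_symd Sp)[Sq sq]].
  by rewrite symd_FI.
by rewrite symd_FI // sq.
Qed.

Lemma comp_sub_FJ p : p \in S -> (comp p \subset F k n J) = ~~ row_sign p.1.
Proof.
move=> Sp; apply/subsetP/idP => [/(_ p (comp_id p)) | sgn q /(mem_comp_symd Sp)[Sq sq]].
  by rewrite symd_FJ.
by rewrite symd_FJ // sq.
Qed.

Lemma symd_row_neq (p : cell) : p \in S -> nth 0 I p.1 != nth 0 J p.1.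
Proof. by rewrite mem_symd => Sp; lia. Qed.

Lemma symd_row_cell a : a < k -> nth 0 I a != nth 0 J a ->
  exists2 p : cell, p \in S & p.1 = a :> nat.
Proof.
move=> lt_a neq_a; have [? ? ? ?] := row_bounds lt_a.
have lt_c : minn (nth 0 I a) (nth 0 J a) - a.+1 < n - k by lia.
by exists (Ordinal lt_a, Ordinal lt_c); rewrite // mem_symd /=; lia.
Qed.

Lemma connect_same_row (p q : cell) : p \in S -> q \in S -> p.1 = q.1 :> nat ->
  connect e p q.
Proof.
wlog le_qp : p q / q.2 <= p.2 => [sym | Sp Sq eq_pq].
  case: (leqP q.2 p.2) => [|/ltnW]; first exact: sym.
  by move=> le_pq Sp Sq eq_pq; rewrite connect_symd_sym sym.
by apply: connect_symd_SW; rewrite ?eq_pq.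
Qed.

Lemma nestE a b : a < b < k ->
  nest (nth 0 I a) (nth 0 I b) (nth 0 J a) (nth 0 J b) =
  [&& nth 0 I a != nth 0 J a, nth 0 I b != nth 0 J b &
      row_sign a != row_sign b].
Proof.
move=> lt_abk; have [? ?] := row_gaps (ltac:(lia) : a <= b < k).
by rewrite /nest; apply/idP/idP; lia.
Qed.

Lemma cross_row_sign a b : a < b < k ->
  cross (nth 0 I a) (nth 0 I b) (nth 0 J a) (nth 0 J b) ->
  [&& nth 0 I a != nth 0 J a, nth 0 I b != nth 0 J b &
      row_sign a == row_sign b].
Proof.
by move=> lt_abk; have [? ?] := row_gaps (ltac:(lia) : a <= b < k); rewrite /cross; lia.
Qed.

Lemma cross_over_empty_row a b : a.+1 < b < k -> nth 0 I a.+1 = nth 0 J a.+1 ->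
  nth 0 I a != nth 0 J a -> nth 0 I b != nth 0 J b ->
  row_sign a = row_sign b ->
  cross (nth 0 I a) (nth 0 I b) (nth 0 J a) (nth 0 J b).
Proof.
move=> lt_abk eq_a1; have [? ?] := row_gaps (ltac:(lia) : a <= a.+1 < k).
have [? ?] := row_gaps (ltac:(lia) : a.+1 <= b < k).
by rewrite /cross; lia.
Qed.

Lemma adjS_next_row_noncross (p q : cell) : e p q -> q.1 = p.1.+1 :> nat ->
  ~~ cross (nth 0 I p.1) (nth 0 I q.1) (nth 0 J p.1) (nth 0 J q.1).
Proof. by case/and3P; rewrite !mem_symd adjE /cross => Sp Sq adj_pq eq_q1; lia. Qed.

Lemma connect_next_row (p q : cell) : p \in S -> q \in S -> q.1 = p.1.+1 :> nat ->
  row_sign p.1 = row_sign q.1 ->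
  ~~ cross (nth 0 I p.1) (nth 0 I q.1) (nth 0 J p.1) (nth 0 J q.1) -> connect e p q.
Proof.
move=> Sp Sq eq_q1 eq_sign noncross.
have lt_q := ltn_ord q.1; have [? ? ? ?] := row_bounds (ltn_ord p.1).
have [? ?] := row_gaps (ltac:(lia) : p.1 <= q.1 < k).
move: (Sp) (Sq); rewrite !mem_symd => Sp' Sq'.
pose c := maxn (nth 0 I p.1) (nth 0 J p.1) - p.1.+2.
have lt_c : c < n - k by rewrite /c; lia.
pose u : cell := (p.1, Ordinal lt_c); pose v : cell := (q.1, Ordinal lt_c).
have Su : u \in S by rewrite mem_symd /= /c; lia.
have Sv : v \in S by move: noncross; rewrite mem_symd /= /c /cross; lia.
apply: connect_trans (connect_same_row Sp Su _) _ => //.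
apply: connect_trans (connect1 (_ : e u v)) (connect_same_row Sv Sq _) => //.
by rewrite /adjS Su Sv adjE /=; lia.
Qed.

Lemma closed_rows_le a :
  (forall p q : cell, e p q -> p.1 = a :> nat -> q.1 != a.+1 :> nat) ->
  closed e [pred z : cell | z.1 <= a].
Proof.
move=> no_link; suff step (p q : cell) : e p q -> p.1 <= a -> q.1 <= a.
  by move=> p q epq; rewrite !inE; apply/idP/idP; apply: step; rewrite // adjS_sym.
move=> epq le_pa; rewrite leqNgt; apply/negP => lt_aq.
have /and3P[_ _] := epq; rewrite adjE => adj_pq.
have eq_pa : p.1 = a :> nat by lia.
by move: (no_link p q epq eq_pa); lia.
Qed.

Lemma mem_nth_comps i p : i < size L -> p \in P i -> p \in S /\ P i = comp p.
Proof.
move=> lt_i; have [c Sc ->] := nth_comps lt_i => cp.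
by have [Sp _] := mem_comp_symd Sc cp; move: cp; rewrite inE => /comp_eq.
Qed.

Local Notation aI := (alpha k n I I J).

Lemma nth_alpha i p : i < size L -> p \in P i ->
  nth false aI i = row_sign p.1.
Proof.
move=> lt_i Pi_p; have [Sp Pi] := mem_nth_comps lt_i Pi_p.
by rewrite (nth_map set0) // Pi comp_sub_FI.
Qed.

Lemma alphaJ : alpha k n J I J = map negb aI.
Proof.
rewrite /alpha -map_comp; apply/eq_in_map => C; rewrite mem_comps.
by case/componentsP=> c Sc ->; rewrite /= comp_sub_FI ?comp_sub_FJ.
Qed.

Lemma nonnesting_constant : nonnesting k I J <-> constant aI.
Proof.
rewrite constant_eq_in; split=> [nonnest | const a b lt_abk].
  have sign_lt (p q : cell) : p \in S -> q \in S -> p.1 < q.1 ->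
      row_sign p.1 = row_sign q.1.
    move=> Sp Sq lt_pq; have lt_pqk : p.1 < q.1 < k by rewrite lt_pq ltn_ord.
    by move: (nonnest _ _ lt_pqk); rewrite nestE // !symd_row_neq //= negbK => /eqP.
  move=> _ _ /mapP[C + ->] /mapP[D + ->]; rewrite !mem_comps.
  case/componentsP=> c Sc ->; case/componentsP=> d Sd ->; rewrite !comp_sub_FI //.
  case: (ltngtP c.1 d.1) => [lt_cd | lt_dc | /val_inj->]; first exact: sign_lt.
    by rewrite (sign_lt d c).
  by [].
rewrite nestE //; apply/negP => /and3P[neq_a neq_b]; apply/negP.
have [x Sx x1] := symd_row_cell (ltac:(lia) : a < k) neq_a.
have [y Sy y1] := symd_row_cell (ltac:(lia) : b < k) neq_b.
have alpha_comp p : p \in S -> (comp p \subset F k n I) \in aI.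
  by move=> Sp; apply: map_f; rewrite mem_comps; apply/componentsP; exists p.
rewrite -x1 -y1 -(comp_sub_FI Sx) -(comp_sub_FI Sy).
by rewrite (const _ _ (alpha_comp x Sx) (alpha_comp y Sy)) eqxx.
Qed.

Lemma consecutive_comps_empty_rows i (x y : cell) : i.+1 < size L ->
  x \in P i -> {in P i, forall z : cell, z.1 <= x.1} ->
  y \in P i.+1 -> {in P i.+1, forall z : cell, y.1 <= z.1} ->
  forall l, x.1 < l < y.1 -> nth 0 I l = nth 0 J l.
Proof.
move=> lt_i1 Pi_x max_x Pi1_y min_y l lt_l; apply/eqP; apply: contraT => neq_l.
have [z Sz z1] := symd_row_cell (ltac:(have := ltn_ord y.1; lia) : l < k) neq_l.
have [m lt_m Pm] := comps_index Sz; have Pm_z : z \in P m by rewrite Pm comp_id.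
have le_im := comps_index_row (ltnW lt_i1) lt_m Pi_x Pm_z (ltac:(lia)).
have le_mi1 := comps_index_row lt_m lt_i1 Pm_z Pi1_y (ltac:(lia)).
have [eq_mi | eq_mi1] : m = i \/ m = i.+1 by lia.
  by move: Pm_z; rewrite eq_mi => /max_x; lia.
by move: Pm_z; rewrite eq_mi1 => /min_y; lia.
Qed.

Lemma noncrossing_alternating : noncrossing k I J -> sorted (fun x y => x != y) aI.
Proof.
move=> noncross; apply/(sortedP false) => i; rewrite size_map => lt_i1.
have lt_i := ltnW lt_i1.
have [c _ Pi] := nth_comps lt_i; have [d _ Pi1] := nth_comps lt_i1.
have [x Pi_x max_x] :=
  @arg_maxnP _ c (fun z => z \in P i) (fun z : cell => z.1) ltac:(by rewrite /= Pi comp_id).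
have [y Pi1_y min_y] :=
  @arg_minnP _ d (fun z => z \in P i.+1) (fun z : cell => z.1) ltac:(by rewrite /= Pi1 comp_id).
have [Sx Pi_xE] := mem_nth_comps lt_i Pi_x; have [Sy _] := mem_nth_comps lt_i1 Pi1_y.
rewrite (nth_alpha lt_i Pi_x) (nth_alpha lt_i1 Pi1_y); apply/negP => /eqP eq_sign.
have before_i : before (P i) (P i.+1) by apply: before_nth; rewrite ltnSn.
have lt_xy : x.1 < y.1 by case/andP: (before_i x y Pi_x Pi1_y).
have empty := consecutive_comps_empty_rows lt_i1 Pi_x max_x Pi1_y min_y.
have lt_yk := ltn_ord y.1.
have xy_noncross := noncross x.1 y.1 (ltac:(by rewrite lt_xy lt_yk)) empty.
case: (ltngtP x.1.+1 y.1) => [gap | lt_yx | adjacent].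
- case/negP: xy_noncross; apply: cross_over_empty_row; rewrite ?symd_row_neq ?eq_sign ?gap //.
  by apply: empty; rewrite ltnSn.
- by rewrite ltnNge -ltnS lt_yx in lt_xy.
have xy := connect_next_row Sx Sy (esym adjacent) eq_sign xy_noncross.
have Pi_y : y \in P i by rewrite Pi_xE inE.
by case/andP: (before_i y y Pi_y Pi1_y); rewrite ltnn.
Qed.

Lemma alternating_noncrossing : sorted (fun x y => x != y) aI -> noncrossing k I J.
Proof.
move/(sortedP false); rewrite size_map => alt a b /andP[lt_ab lt_bk] empty.
apply/negP => crossing.
have lt_abk : a < b < k by rewrite lt_ab.
have lt_ak := ltn_trans lt_ab lt_bk.
have /and3P[neq_a neq_b /eqP eq_sign] := cross_row_sign lt_abk crossing.
have [x Sx x1] := symd_row_cell lt_ak neq_a; have [y Sy y1] := symd_row_cell lt_bk neq_b.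
have no_link (p q : cell) : e p q -> p.1 = a :> nat -> q.1 != a.+1 :> nat.
  move=> epq p1; apply/eqP => q1; case: (ltngtP a.+1 b) => [gap | | adjacent].
  - have /and3P[_ Sq _] := epq.
    by move: (symd_row_neq Sq); rewrite q1 empty ?eqxx // ltnSn gap.
  - by rewrite ltnS leqNgt lt_ab.
  - by move: (adjS_next_row_noncross epq); rewrite p1 q1 adjacent crossing => /(_ erefl).
have xy_disc : ~~ connect e x y.
  apply/negP => /(closed_connect (closed_rows_le no_link)); rewrite !inE x1 y1 leqnn.
  by rewrite leqNgt lt_ab.
have [ix lt_ix Pix] := comps_index Sx; have [iy lt_iy Piy] := comps_index Sy.
have Pix_x : x \in P ix by rewrite Pix comp_id.
have Piy_y : y \in P iy by rewrite Piy comp_id.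
have le_ixy := comps_index_row lt_ix lt_iy Pix_x Piy_y (ltac:(by rewrite x1 y1)).
have lt_ixy : ix < iy.
  rewrite ltn_neqAle le_ixy andbT; apply: contra xy_disc => /eqP eq_ixy.
  by move: Piy_y; rewrite -eq_ixy Pix inE.
have := alt ix; rewrite (nth_alpha lt_ix Pix_x) x1 eq_sign.
case: (ltngtP ix.+1 iy) => [gap | | ->].
- move=> _; have lt_ix1 := ltn_trans gap lt_iy.
  have [z _ Pz] := nth_comps lt_ix1; have Pz_z : z \in P ix.+1 by rewrite Pz comp_id.
  have [Sz _] := mem_nth_comps lt_ix1 Pz_z.
  have lt_ix_ix1 : ix < ix.+1 < size L by rewrite ltnSn lt_ix1.
  have lt_ix1_iy : ix.+1 < iy < size L by rewrite gap lt_iy.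
  have /andP[xz _] := before_nth lt_ix_ix1 Pix_x Pz_z.
  have /andP[zy _] := before_nth lt_ix1_iy Pz_z Piy_y.
  by move: (symd_row_neq Sz); rewrite empty ?eqxx // -x1 -y1 xz zy.
- by rewrite ltnS leqNgt lt_ixy.
- by rewrite (nth_alpha lt_iy Piy_y) y1 eqxx => /(_ lt_iy).
Qed.

End SymmetricDifference.

Theorem lemma4p11 (k n : nat) (I J : seq nat) :
  0 < k < n -> inV k n I -> inV k n J ->
  let d := size (comps k n I J) in
  let aI := alpha k n I I J in
  let aJ := alpha k n J I J in
  (nonnesting k I J <-> [:: aI; aJ] =i [:: nseq d false; nseq d true]) /\
  (noncrossing k I J <-> [:: aI; aJ] =i [:: alt01 d; alt10 d]).
Proof.
move=> _ VI VJ d aI aJ.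
have -> : aJ = map negb aI by exact: alphaJ.
have -> : d = size aI by rewrite size_map.
rewrite compl_pair_nseqP compl_pair_altP (nonnesting_constant VI VJ).
by split=> //; split; [apply: noncrossing_alternating | apply: alternating_noncrossing].
Qed.
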